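(* Let $Z=\prod_{c=1}^C Z_c$ with each $Z_c$ finite and let $Z^{\text{train}}\subseteq Z$ be a training set with targets $y\in\mathbb{R}^{|Z^{\text{train}}|}$. For each $J\subseteq\{1,\dots,C\}$ and each value $z_J=(z_c)_{c\in J}$, let $x_J[z_J]\in\mathbb{R}^d$ be a random vector with i.i.d. $\mathcal{N}(0,\sigma_k^2)$ entries, $\sigma_k^2>0$, $k=|J|$, all these vectors being sampled independently of each other, and represent $z\in Z$ by $x(z)=\sum_{J\subseteq\{1,\dots,C\}}x_J[z_J]$. Let $X$ be the matrix whose rows are $x(z)$, $z\in Z^{\text{train}}$, let $K=XX^T$, $a=K^{-1}y$, and define the kernel regression estimator $f(\tilde z)=a^TXx(\tilde z)$. Then for each test input $\tilde z\in Z\setminus Z^{\text{train}}$, the expectation $\mathbb{E}[f(\tilde z)]$ (over the random representation) is conjunction-wise additive: there exist functions $g_J:\prod_{c\in J}Z_c\to\mathbb{R}$ such that $$\mathbb{E}[f(\tilde z)]=\sum_{J\in\mathrm{Conj}(\tilde z\mid Z^{\text{train}})} g_J(\tilde z_J).$$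
   Context: $\mathrm{Conj}(z\mid Z^{\text{train}}):=\{J\subseteq\{1,\dots,C\}:\ \exists z^{\text{tr}}\in Z^{\text{train}}\ \text{with}\ z_c=z^{\text{tr}}_c\ \forall c\in J\}$, and $z_J:=(z_c)_{c\in J}$. A function of $z$ is called conjunction-wise additive (relative to $Z^{\text{train}}$) if it can be written as a sum over $J\in\mathrm{Conj}(z\mid Z^{\text{train}})$ of functions depending only on $z_J$. *)

From HB Require Import structures.
From mathcomp Require Import all_boot all_order all_algebra.
From mathcomp Require Import all_classical all_reals all_analysis.
Set Implicit Arguments. Unset Strict Implicit. Unset Printing Implicit Defensive.
Import Order.TTheory GRing.Theory Num.Theory.
Local Open Scope classical_set_scope.
Local Open Scope ring_scope.

Definition inputs (C : nat) (Zc : 'I_C -> finType) : finType :=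
  {dffun forall c : 'I_C, Zc c}.

(* Partial assignments: w c = Some v for c in J = support, None elsewhere.
   A value z_J = (z_c)_{c in J} of a conjunction J is encoded by the partial
   assignment with support J (J is recovered as the support). *)
Definition partial (C : nat) (Zc : 'I_C -> finType) : finType :=
  {dffun forall c : 'I_C, option (Zc c)}.

Definition assign_support (C : nat) (Zc : 'I_C -> finType) (w : partial Zc) : {set 'I_C} :=
  [set c | w c != None].

Definition restr (C : nat) (Zc : 'I_C -> finType) (J : {set 'I_C}) (z : inputs Zc)
  : partial Zc :=
  [ffun c => if c \in J then Some (z c) else None].

Definition Conj (C : nat) (Zc : 'I_C -> finType) (Ztr : {set inputs Zc}) (z : inputs Zc)
  : {set {set 'I_C}} :=
  [set J : {set 'I_C} | [exists ztr in Ztr, [forall c in J, ztr c == z c]]].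

Definition mutually_independent d (T : measurableType d) (R : realType)
  (P : probability T R) (I : finType) (X : I -> T -> R) : Prop :=
  forall B : I -> set R, (forall i, measurable (B i)) ->
    P [set t | forall i, B i (X i t)] = (\prod_(i : I) P (X i @^-1` B i))%E.

Definition xrep d (T : measurableType d) (R : realType) (P : probability T R)
  (C : nat) (Zc : 'I_C -> finType) (dim : nat)
  (x : partial Zc -> 'I_dim -> {RV P >-> R}) (z : inputs Zc) (t : T) : 'rV[R]_dim :=
  \row_(j < dim) \sum_(J : {set 'I_C}) x (restr J z) j t.

Definition Xmat d (T : measurableType d) (R : realType) (P : probability T R)
  (C : nat) (Zc : 'I_C -> finType) (dim : nat)
  (x : partial Zc -> 'I_dim -> {RV P >-> R}) (Ztr : {set inputs Zc}) (t : T)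
  : 'M[R]_(#|Ztr|, dim) :=
  \matrix_(i < #|Ztr|, j < dim) xrep x (enum_val i) t 0 j.

Definition Kmat d (T : measurableType d) (R : realType) (P : probability T R)
  (C : nat) (Zc : 'I_C -> finType) (dim : nat)
  (x : partial Zc -> 'I_dim -> {RV P >-> R}) (Ztr : {set inputs Zc}) (t : T)
  : 'M[R]_#|Ztr| :=
  Xmat x Ztr t *m (Xmat x Ztr t)^T.

Definition acoef d (T : measurableType d) (R : realType) (P : probability T R)
  (C : nat) (Zc : 'I_C -> finType) (dim : nat)
  (x : partial Zc -> 'I_dim -> {RV P >-> R}) (Ztr : {set inputs Zc})
  (y : 'cV[R]_#|Ztr|) (t : T) : 'cV[R]_#|Ztr| :=
  invmx (Kmat x Ztr t) *m y.

Definition kr_estimator d (T : measurableType d) (R : realType) (P : probability T R)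
  (C : nat) (Zc : 'I_C -> finType) (dim : nat)
  (x : partial Zc -> 'I_dim -> {RV P >-> R}) (Ztr : {set inputs Zc})
  (y : 'cV[R]_#|Ztr|) (zt : inputs Zc) (t : T) : R :=
  ((acoef x y t)^T *m Xmat x Ztr t *m (xrep x zt t)^T) 0 0.

Definition kr_term d (T : measurableType d) (R : realType) (P : probability T R)
  (C : nat) (Zc : 'I_C -> finType) (dim : nat)
  (x : partial Zc -> 'I_dim -> {RV P >-> R}) (Ztr : {set inputs Zc})
  (y : 'cV[R]_#|Ztr|) (w : partial Zc) (t : T) : R :=
  ((acoef x y t)^T *m Xmat x Ztr t *m (\col_(j < dim) x w j t)) 0 0.

(* Expand f(z~) = a^T X x(z~) into the summands a^T X x_J[z~_J], one for each J.
   When J is not in Conj(z~ | Z^train), the value z~_J is the restriction of no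
   training input, so X, K and a do not involve the Gaussian vector x_J[z~_J],
   while the summand is linear in it.  Negating that vector preserves the joint
   law of all the (independent, centered, hence symmetric) representation
   vectors and negates the summand, whose expectation is therefore 0.  What is
   left is a sum over Conj(z~ | Z^train) of g_J(z~_J) := E[a^T X x_J[z~_J]]. *)

From HB Require Import structures.
From mathcomp Require Import all_boot all_order all_algebra.
From mathcomp Require Import all_classical all_reals all_analysis.
Import Order.TTheory GRing.Theory Num.Theory.
From mathcomp Require Import lra measurable_realfun.
Import numFieldTopology.Exports.
Local Open Scope classical_set_scope.
Local Open Scope ring_scope.

Section box_sigma_algebra.
Context {R : realType} {I : finType}.

Definition box (B : I -> set R) : set (I -> R) := [set v | forall i, B i (v i)].

Definition boxes : set (set (I -> R)) :=
  [set A | exists2 B : I -> set R, (forall i, measurable (B i)) & A = box B].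

Local Notation rvec := (g_sigma_algebraType boxes).

Lemma boxes_setI_closed : setI_closed boxes.
Proof.
move=> _ _ [B mB ->] [B' mB' ->]; exists (fun i => B i `&` B' i).
  by move=> i; exact: measurableI.
apply/seteqP; split=> v /=; first by move=> [vB vB'] i.
by move=> vBB'; split=> i; case: (vBB' i).
Qed.

Lemma measurable_fun_rvec d (T : measurableType d) (f : T -> rvec) :
  (forall i, measurable_fun setT (fun t => f t i)) -> measurable_fun setT f.
Proof.
move=> mf; apply: (@measurability _ _ _ _ setT f boxes) => //.
move=> _ [_ [B mB ->] <-].
rewrite (_ : _ `&` _ = \bigcap_(i in setT) ((fun t => f t i) @^-1` B i)).
  apply: fin_bigcap_measurable; first exact: finite_finset.
  by move=> i _; rewrite -[X in measurable X]setTI; exact: mf.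
by apply/seteqP; split=> t /=; [move=> [_ fB] i _|move=> fB; split=> // i]; exact: fB.
Qed.

Lemma measurable_coord (i : I) : measurable_fun setT (fun v : rvec => v i).
Proof.
move=> _ A mA; rewrite setTI; apply: sub_sigma_algebra.
exists (fun k => if k == i then A else setT); first by move=> k; case: ifP.
apply/seteqP; split=> v /=; first by move=> Av k; case: eqP => [->|].
by move=> /(_ i); rewrite eqxx.
Qed.

Definition coordmap (phi : I -> R -> R) (v : rvec) : rvec := fun i => phi i (v i).

Lemma measurable_coordmap (phi : I -> R -> R) :
  (forall i, measurable_fun setT (phi i)) ->
  measurable_fun setT (coordmap phi).
Proof.
move=> mphi; apply: measurable_fun_rvec => i.
exact: measurableT_comp (mphi i) (measurable_coord i).
Qed.

Definition signflip (S : pred I) (i : I) : R -> R := if S i then -%R else id.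

Lemma measurable_signflip S i : measurable_fun setT (signflip S i).
Proof. by rewrite /signflip; case: (S i) => //; exact: oppr_measurable. Qed.

End box_sigma_algebra.

Notation rvec R I := (g_sigma_algebraType (@boxes R I)).

Lemma normal_pdf0N (R : realType) (s x : R) : s != 0 ->
  normal_pdf 0 s (- x) = normal_pdf 0 s x.
Proof. by move=> s0; rewrite /normal_pdf (negbTE s0) /normal_fun !subr0 sqrrN. Qed.

Lemma normal_prob0N (R : realType) (s : R) (A : set R) : s != 0 -> measurable A ->
  normal_prob 0 s (-%R @^-1` A) = normal_prob 0 s A.
Proof.
move=> s0 mA.
have mN : measurable_fun setT (-%R : measurableTypeR R -> measurableTypeR R).
  exact: oppr_measurable.
have mpdf : measurable_fun (A : set (measurableTypeR R)) (fun x => (normal_pdf 0 s x)%:E).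
  by apply/measurable_EFinP; apply: measurable_funTS; exact: measurable_normal_pdf.
have push := ge0_integral_pushforward mN lebesgue_measure mA mpdf.
rewrite /normal_prob.
transitivity (\int[lebesgue_measure]_(x in -%R @^-1` A)
                ((fun x => (normal_pdf 0 s x)%:E) \o -%R) x)%E.
  by apply: eq_integral => x _; rewrite /= normal_pdf0N.
rewrite -push; last by move=> x _; rewrite lee_fin normal_pdf_ge0.
by apply: eq_measure_integral => B mB _ /=; rewrite lebesgue_measureN.
Qed.

Lemma centered_normal_symmetric d (T : measurableType d) (R : realType)
    (P : probability T R) (X : {RV P >-> R}) (s : R) : s != 0 ->
  (forall A : set R, measurable A -> distribution P X A = normal_prob 0 s A) ->
  forall A : set R, measurable A -> P (X @^-1` (-%R @^-1` A)) = P (X @^-1` A).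
Proof.
move=> s0 X_normal A mA.
have mNA : measurable (-%R @^-1` A).
  by rewrite -[X in measurable X]setTI; exact: oppr_measurable.
move: (X_normal _ mA) (X_normal _ mNA); rewrite /distribution /pushforward => -> ->.
exact: normal_prob0N.
Qed.

Section joint_law.
Local Open Scope ereal_scope.
Context {d} {T : measurableType d} {R : realType} {P : probability T R} {I : finType}
  (X : I -> {RV P >-> R}).
Hypothesis X_indep : mutually_independent P (fun i => X i : T -> R).

Definition joint (t : T) : rvec R I := fun i => X i t.

Lemma measurable_joint : measurable_fun setT joint.
Proof. by apply: measurable_fun_rvec => i; exact: measurable_funP. Qed.

Section coordmap_invariance.
Variable phi : I -> R -> R.
Hypothesis mphi : forall i, measurable_fun setT (phi i).
Hypothesis X_phi_law : forall i A, measurable A ->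
  P (X i @^-1` (phi i @^-1` A)) = P (X i @^-1` A).

Let mphi_joint : measurable_fun setT (coordmap phi \o joint).
Proof. apply: measurableT_comp; [exact: measurable_coordmap|exact: measurable_joint]. Qed.

Lemma joint_coordmap_law A : measurable A ->
  P (joint @^-1` A) = P ((coordmap phi \o joint) @^-1` A).
Proof.
(* By independence both laws agree on boxes, a pi-system generating the
   sigma-algebra. *)
move=> mA.
apply: (@measure_unique _ R (rvec R I) boxes (fun=> setT) erefl (@boxes_setI_closed R I)
  _ _ (pushforward P joint) (pushforward P (coordmap phi \o joint))) => //.
- by move=> _; exists (fun=> setT) => //; apply/seteqP.
- by rewrite bigcup_const.
- exact: measurable_joint.
- move=> mjoint _ [B mB ->].
  have mphiB i : measurable (phi i @^-1` B i).
    by rewrite -[X in measurable X]setTI; exact: mphi.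
  transitivity (P [set t | forall i, B i (X i t)]) => //.
  transitivity (P [set t | forall i, (phi i @^-1` B i) (X i t)]) => //.
  by rewrite X_indep // (X_indep _ mphiB); apply: eq_bigr => i _; rewrite X_phi_law.
- by move=> mjoint _; change (P setT < +oo); rewrite probability_setT ltry.
Qed.

Lemma integral_joint_coordmap (F : rvec R I -> R) : measurable_fun setT F ->
  P.-integrable setT (fun t => (F (joint t))%:E) ->
  P.-integrable setT (fun t => (F (coordmap phi (joint t)))%:E) ->
  \int[P]_t (F (coordmap phi (joint t)))%:E = \int[P]_t (F (joint t))%:E.
Proof.
move=> mF intF intFphi.
have mFE : measurable_fun setT (EFin \o F : rvec R I -> \bar R) by exact/measurable_EFinP.
have := integral_pushforward mphi_joint (mu := P) mFE intFphi measurableT.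
have := integral_pushforward measurable_joint (mu := P) mFE intF measurableT.
move=> /= <- <-.
apply: eq_measure_integral; first exact: measurable_joint.
by move=> mjoint A mA _; exact/esym/joint_coordmap_law.
Qed.

End coordmap_invariance.

Lemma integral_odd_joint_eq0 (S : pred I) (F : rvec R I -> R) :
  (forall i, S i -> forall A : set R, measurable A ->
     P (X i @^-1` (-%R @^-1` A)) = P (X i @^-1` A)) ->
  measurable_fun setT F ->
  (forall v, F (coordmap (signflip S) v) = - F v)%R ->
  P.-integrable setT (fun t => (F (joint t))%:E) ->
  \int[P]_t (F (joint t))%:E = 0.
Proof.
move=> X_sym mF F_odd intF.
have flip_law i (A : set R) : measurable A ->
    P (X i @^-1` (signflip S i @^-1` A)) = P (X i @^-1` A).
  by rewrite /signflip; case: ifP => // Si; exact: X_sym.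
have intFflip : P.-integrable setT (fun t => (F (coordmap (signflip S) (joint t)))%:E).
  under eq_fun do rewrite F_odd EFinN.
  exact: integrableN.
have := integral_joint_coordmap (signflip S) (measurable_signflip S) flip_law F mF
  intF intFflip.
under eq_integral do rewrite F_odd EFinN -mulN1e.
rewrite integralZl //.
have /fineK <- := integrable_fin_num measurableT intF.
move: (fine _) => r /eqP; rewrite -EFinM eqe => /eqP r_odd.
by congr EFin; lra.
Qed.

End joint_law.

Lemma measurable_inv (R : realType) : measurable_fun setT (@GRing.inv R).
Proof.
rewrite (_ : GRing.inv = fun x : R => if x == 0 then 0 else x^-1); last first.
  by apply/funext => x; case: eqP => // ->; rewrite invr0.
apply: measurable_fun_if => //.
- by apply: measurable_fun_eqr; [exact: measurable_id|exact: measurable_cst].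
- rewrite setTI (_ : _ @^-1` _ = [set x : R | x != 0]); last first.
    by apply/seteqP; split=> x /=; case: eqP.
  apply: open_continuous_measurable_fun; first exact: open_neq.
  by move=> x /set_mem /= x0; exact: inv_continuous.
Qed.

Section measurable_matrix.
Context {d} {S : measurableType d} {R : realType}.

Definition measurable_mx {m n} (M : S -> 'M[R]_(m, n)) :=
  forall i j, measurable_fun setT (fun s => M s i j).

Lemma measurable_mx_cst {m n} (A : 'M[R]_(m, n)) : measurable_mx (fun _ => A).
Proof. by move=> i j; exact: measurable_cst. Qed.

Lemma measurable_mx_trmx {m n} {A : S -> 'M[R]_(m, n)} :
  measurable_mx A -> measurable_mx (fun s => (A s)^T).
Proof. by move=> mA i j; under eq_fun do rewrite mxE; exact: mA. Qed.

Lemma measurable_mx_mul {m n p} {A : S -> 'M[R]_(m, n)} {B : S -> 'M[R]_(n, p)} :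
  measurable_mx A -> measurable_mx B -> measurable_mx (fun s => A s *m B s).
Proof.
move=> mA mB i j; under eq_fun do rewrite mxE.
by apply: measurable_sum => k; exact: measurable_funM.
Qed.

Lemma measurable_det {n} {A : S -> 'M[R]_n} :
  measurable_mx A -> measurable_fun setT (fun s => \det (A s)).
Proof.
move=> mA; apply: measurable_sum => sigma.
by apply: measurable_funM; [exact: measurable_cst|exact: measurable_prod].
Qed.

Lemma measurable_mx_adj {n} {A : S -> 'M[R]_n} :
  measurable_mx A -> measurable_mx (fun s => \adj (A s)).
Proof.
case: n A => [|n] A mA i j; first by case: i.
under eq_fun do rewrite mxE /cofactor.
apply: measurable_funM; first exact: measurable_cst.
by apply: measurable_det => k l; under eq_fun do rewrite !mxE; exact: mA.
Qed.

Lemma measurable_mx_inv {n} {A : S -> 'M[R]_n} :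
  measurable_mx A -> measurable_mx (fun s => invmx (A s)).
Proof.
move=> mA i j.
(* [invmx] returns its argument on singular matrices. *)
rewrite (_ : (fun s => _) = fun s => if \det (A s) == 0 then A s i j
            else (\det (A s))^-1 * \adj (A s) i j); last first.
  apply/funext => s; rewrite /invmx unitmxE unitfE.
  by case: eqP => _ //=; rewrite mxE.
apply: measurable_fun_if => //.
- by apply: measurable_fun_eqr; [exact: measurable_det|exact: measurable_cst].
- exact: measurable_funS (mA i j).
- apply: measurable_funS (_ : measurable_fun setT _) => //.
  apply: measurable_funM; last exact: measurable_mx_adj.
  by apply: measurableT_comp; [exact: measurable_inv|exact: measurable_det].
Qed.

End measurable_matrix.

Lemma assign_support_restr {C : nat} {Zc : 'I_C -> finType} (J : {set 'I_C})
    (z : inputs Zc) :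
  assign_support (restr J z) = J.
Proof. by apply/setP => c; rewrite inE ffunE; case: (c \in J). Qed.

Lemma restr_neq_notin_Conj {C : nat} {Zc : 'I_C -> finType} {Ztr : {set inputs Zc}}
    {zt : inputs Zc} {J0 : {set 'I_C}} :
  J0 \notin Conj Ztr zt -> forall z J, z \in Ztr -> restr J z != restr J0 zt.
Proof.
move=> J0_notin z J z_tr; apply: contraNneq J0_notin => e.
have JJ0 : J = J0 by rewrite -(assign_support_restr J z) e assign_support_restr.
subst J0.
rewrite inE; apply/existsP; exists z; rewrite z_tr; apply/forall_inP => c cJ.
by have := congr1 (fun w : partial Zc => w c) e; rewrite !ffunE cJ => -[->].
Qed.

Section kernel_regression.
Context {R : realType} {C : nat} {Zc : 'I_C -> finType} {dim : nat}
  (Ztr : {set inputs Zc}) (y : 'cV[R]_#|Ztr|).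
Local Notation index := (partial Zc * 'I_dim)%type.

Definition design_mx (u : index -> R) : 'M[R]_(#|Ztr|, dim) :=
  \matrix_(i, j) \sum_(J : {set 'I_C}) u (restr J (enum_val i), j).

Definition kr_term_at (u : index -> R) (w : partial Zc) : R :=
  ((invmx (design_mx u *m (design_mx u)^T) *m y)^T *m design_mx u
     *m \col_j u (w, j)) 0 0.

Lemma kr_termE d (T : measurableType d) (P : probability T R)
    (x : partial Zc -> 'I_dim -> {RV P >-> R}) w t :
  kr_term x y w t = kr_term_at (joint (fun wj : index => x wj.1 wj.2) t) w.
Proof.
rewrite /kr_term /acoef /Kmat.
suff -> : Xmat x Ztr t = design_mx (joint (fun wj : index => x wj.1 wj.2) t) by [].
by apply/matrixP => i j; rewrite !mxE.
Qed.

Lemma kr_estimator_sum d (T : measurableType d) (P : probability T R)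
    (x : partial Zc -> 'I_dim -> {RV P >-> R}) zt t :
  kr_estimator x y zt t = \sum_(J : {set 'I_C}) kr_term x y (restr J zt) t.
Proof.
rewrite /kr_estimator /kr_term.
have -> : (xrep x zt t)^T = \sum_(J : {set 'I_C}) \col_j x (restr J zt) j t.
  apply/matrixP => i k; rewrite !mxE summxE.
  by apply: eq_bigr => J _; rewrite !mxE.
by rewrite mulmx_sumr summxE.
Qed.

Lemma measurable_kr_term_at w :
  measurable_fun setT (fun u : rvec R index => kr_term_at u w).
Proof.
have mX : measurable_mx (fun u : rvec R index => design_mx u).
  move=> i j; apply: (@eq_measurable_fun _ _ _ _ setT
    (fun u : rvec R index => \sum_J u (restr J (enum_val i), j))).
    by move=> u _; rewrite mxE.
  by apply: measurable_sum => J; exact: measurable_coord.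
have mcol : measurable_mx (fun u : rvec R index => \col_j u (w, j)).
  move=> i j.
  apply: (@eq_measurable_fun _ _ _ _ setT (fun u : rvec R index => u (w, i))).
    by move=> u _; rewrite mxE.
  exact: measurable_coord.
have ma : measurable_mx
    (fun u : rvec R index => invmx (design_mx u *m (design_mx u)^T) *m y).
  apply: measurable_mx_mul (measurable_mx_cst _).
  exact/measurable_mx_inv/measurable_mx_mul/measurable_mx_trmx.
exact: measurable_mx_mul (measurable_mx_mul (measurable_mx_trmx ma) mX) mcol 0 0.
Qed.

Lemma kr_term_at_signflip w : (forall z J, z \in Ztr -> restr J z != w) ->
  forall u, kr_term_at (coordmap (signflip [pred wj : index | wj.1 == w]) u) w =
            - kr_term_at u w.
Proof.
move=> w_unseen u; set u' := coordmap _ u.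
have X_eq : design_mx u' = design_mx u.
  apply/matrixP => i j; rewrite !mxE; apply: eq_bigr => J _.
  by rewrite /u' /coordmap /signflip /= (negbTE (w_unseen _ _ (enum_valP i))).
have col_eq : \col_j u' (w, j) = - \col_j u (w, j).
  by apply/matrixP => i j; rewrite !mxE /u' /coordmap /signflip /= eqxx.
by rewrite /kr_term_at X_eq col_eq mulmxN mxE.
Qed.

End kernel_regression.

Section expected_kr_estimator.
Local Open Scope ereal_scope.
Context {R : realType} {dT : measure_display} {T : measurableType dT}
  {P : probability T R} {C : nat} {Zc : 'I_C -> finType} {dim : nat}
  (x : partial Zc -> 'I_dim -> {RV P >-> R}) (Ztr : {set inputs Zc})
  (y : 'cV[R]_#|Ztr|).
Hypothesis kr_term_int :
  forall w, P.-integrable setT (fun t => (kr_term x y w t)%:E).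

Lemma expectation_kr_estimator zt :
  'E_P[kr_estimator x y zt] = \sum_(J : {set 'I_C}) 'E_P[kr_term x y (restr J zt)].
Proof.
rewrite unlock; under eq_integral do rewrite kr_estimator_sum -sumEFin.
by rewrite integral_sum.
Qed.

Lemma expectation_kr_term_notin_Conj zt J :
  mutually_independent P (fun wj : partial Zc * 'I_dim => (x wj.1 wj.2 : T -> R)) ->
  (forall w j (A : set R), measurable A ->
     P (x w j @^-1` (-%R @^-1` A)) = P (x w j @^-1` A)) ->
  J \notin Conj Ztr zt -> 'E_P[kr_term x y (restr J zt)] = 0.
Proof.
move=> x_indep x_sym J_notin; rewrite unlock.
under eq_integral do rewrite kr_termE.
apply: (integral_odd_joint_eq0 _ x_indep [pred wj | wj.1 == restr J zt]
  (fun u => kr_term_at Ztr y u (restr J zt))).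
- by move=> [w j] _; exact: x_sym.
- exact: measurable_kr_term_at.
- exact: kr_term_at_signflip (restr_neq_notin_Conj J_notin).
- by apply: eq_integrable (kr_term_int _) => // t _; rewrite kr_termE.
Qed.

End expected_kr_estimator.

Theorem proposition3 (R : realType) (dT : measure_display) (T : measurableType dT)
  (P : probability T R) (C : nat) (Zc : 'I_C -> finType) (dim : nat)
  (sigma : nat -> R) (x : partial Zc -> 'I_dim -> {RV P >-> R})
  (Ztr : {set inputs Zc}) (y : 'cV[R]_#|Ztr|) :
  (forall k, 0 < sigma k) ->
  (forall (w : partial Zc) (j : 'I_dim) (A : set R), measurable A ->
     distribution P (x w j) A = normal_prob 0 (sigma #|assign_support w|) A) ->
  mutually_independent P (fun wj : partial Zc * 'I_dim => (x wj.1 wj.2 : T -> R)) ->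
  P [set t | Kmat x Ztr t \in unitmx] = 1%E ->
  (forall w : partial Zc, P.-integrable setT (fun t => (kr_term x y w t)%:E)) ->
  exists g : partial Zc -> R,
    forall zt : inputs Zc, zt \notin Ztr ->
      ('E_P[kr_estimator x y zt])%E = ((\sum_(J in Conj Ztr zt) g (restr J zt))%:E)%E.
Proof.
move=> sigma_gt0 x_normal x_indep _ kr_term_int.
exists (fun w => fine 'E_P[kr_term x y w]) => zt _.
have x_sym w j : forall A : set R, measurable A ->
    P (x w j @^-1` (-%R @^-1` A)) = P (x w j @^-1` A).
  by apply: centered_normal_symmetric (x_normal w j); rewrite gt_eqF.
rewrite expectation_kr_estimator // (bigID (mem (Conj Ztr zt))) /=.
rewrite [X in _ + X]big1 ?adde0; last first.
  by move=> J; exact: expectation_kr_term_notin_Conj.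
rewrite -sumEFin; apply: eq_bigr => J _.
by rewrite fineK // unlock; exact: integrable_fin_num.
Qed.
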